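(* For $(\Gamma,\Delta)\in\mathcal{P}(\mathcal{L}_{\Box\!\!\rightarrow})\times\mathcal{P}(\mathcal{L}_{\Box\!\!\rightarrow})$, we have $\Gamma\not\models\Delta$ iff for every finite $\Gamma'\subseteq\Gamma$ and finite $\Delta'\subseteq\Delta$, $\Gamma'\not\models\Delta'$.
   Context: $\mathcal{L}_{\Box\!\!\rightarrow}$ is built from propositional variables with $\wedge,\vee,\to$, strong negation $\sim$, and a binary would-conditional $\Box\!\!\rightarrow$. A Nelsonian conditional model is $\mathcal{M}=(W,\leq,R,V^+,V^-)$ with $W\neq\emptyset$, $\leq$ a preorder, $V^\pm$ assigning $\leq$-upward-closed sets to variables, $R\subseteq W\times(\mathcal{P}(W)\times\mathcal{P}(W))\times W$ such that for all $X,Y$: (c1) $w\leq w'$ and $R_{(X,Y)}(w,v)$ imply $R_{(X,Y)}(w',v')$ for some $v'\geq v$; (c2) $R_{(X,Y)}(w,v)$ and $v\leq v'$ imply $R_{(X,Y)}(w',v')$ for some $w'\geq w$. Verification $\models^+$ / falsification $\models^-$: atoms by $V^\pm$; $\wedge$ verified iff both verified, falsified iff one falsified; $\vee$ dually; $\sim$ swaps; $w\models^+\psi\to\chi$ iff for all $v\geq w$, $v\models^+\psi$ implies $v\models^+\chi$; $w\models^-\psi\to\chi$ iff $w\models^+\psi$ and $w\models^-\chi$; $w\models^+\psi\Box\!\!\rightarrow\chi$ iff for all $v\geq w$ and $u$ with $R_{\|\psi\|}(v,u)$, $u\models^+\chi$; $w\models^-\psi\Box\!\!\rightarrow\chi$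 iff some $u$ has $R_{\|\psi\|}(w,u)$ and $u\models^-\chi$; $\|\psi\|=(\{w\mid w\models^+\psi\},\{w\mid w\models^-\psi\})$. $\Gamma\models\Delta$ ($\mathsf{N4CK}$-consequence) iff no pointed model verifies all members of $\Gamma$ and no member of $\Delta$. *)

From Stdlib Require Import List.

Inductive form : Type :=
| Var : nat -> form
| And : form -> form -> form
| Or : form -> form -> form
| Imp : form -> form -> form
| Neg : form -> form
| Cond : form -> form -> form.

Record model : Type := {
  W : Type;
  W_ne : inhabited W;
  le : W -> W -> Prop;
  le_refl : forall w, le w w;
  le_trans : forall u v w, le u v -> le v w -> le u w;
  R : (W -> Prop) -> (W -> Prop) -> W -> W -> Prop;
  Vp : nat -> W -> Prop;
  Vm : nat -> W -> Prop;
  Vp_up : forall p w w', le w w' -> Vp p w -> Vp p w';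
  Vm_up : forall p w w', le w w' -> Vm p w -> Vm p w';
  c1 : forall X Y w w' v, le w w' -> R X Y w v -> exists v', le v v' /\ R X Y w' v';
  c2 : forall X Y w v v', R X Y w v -> le v v' -> exists w', le w w' /\ R X Y w' v'
}.

Fixpoint ver (M : model) (w : W M) (A : form) {struct A} : Prop :=
  match A with
  | Var p => Vp M p w
  | And a b => ver M w a /\ ver M w b
  | Or a b => ver M w a \/ ver M w b
  | Imp a b => forall v, le M w v -> ver M v a -> ver M v b
  | Neg a => fal M w a
  | Cond a b => forall v u, le M w v ->
                  R M (fun x => ver M x a) (fun x => fal M x a) v u -> ver M u b
  end
with fal (M : model) (w : W M) (A : form) {struct A} : Prop :=
  match A with
  | Var p => Vm M p w
  | And a b => fal M w a \/ fal M w b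
  | Or a b => fal M w a /\ fal M w b
  | Imp a b => ver M w a /\ fal M w b
  | Neg a => ver M w a
  | Cond a b => exists u, R M (fun x => ver M x a) (fun x => fal M x a) w u /\ fal M u b
  end.

Definition conseq (Gamma Delta : form -> Prop) : Prop :=
  ~ exists (M : model) (w : W M),
      (forall A, Gamma A -> ver M w A) /\ (forall B, Delta B -> ~ ver M w B).

Definition finite_subset (S' S : form -> Prop) : Prop :=
  (exists l : list form, forall x, S' x <-> In x l) /\ (forall x, S' x -> S x).

From Stdlib Require Import List PeanoNat Classical FunctionalExtensionality PropExtensionality.
From Stdlib Require Cantor.
Import ListNotations.

(* Compactness comes from strong completeness with respect to a canonical model. Call T a theory
   when every finite subset of T together with every finite set of formulas outside T is
   satisfiable at a point of some model, as a pair (verified, not verified). A Lindenbaum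
   construction along an enumeration of formulas extends every finitely satisfiable pair (G, D)
   to a theory containing G and disjoint from D. Theories ordered by inclusion are the worlds of
   the canonical model, and R_(X,Y) relates T to U when (X, Y) is the pair of truth sets of A and
   ~A for some A and (T, U) is finitely satisfiable at the two ends of R_||A||-edges; such pairs
   come from the same Lindenbaum construction, run on formulas labelled by the world they speak
   about. Conditions (c1) and (c2) pass to the canonical model through the formulas
   ~(A []-> ~/\S) and A []-> (/\S -> \/P), and the truth lemma says that a theory verifies A iff
   A belongs to it and falsifies A iff ~A belongs to it. *)

(** * Lindenbaum's lemma *)

Lemma Cantor_to_nat_inj a b c d : Cantor.to_nat (a, b) = Cantor.to_nat (c, d) -> a = c /\ b = d.
Proof.
  intro E. apply (f_equal Cantor.of_nat) in E. rewrite !Cantor.cancel_of_to in E.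
  injection E. auto.
Qed.

Fixpoint form_code (A : form) : nat :=
  match A with
  | Var n => Cantor.to_nat (0, n)
  | And a b => Cantor.to_nat (1, Cantor.to_nat (form_code a, form_code b))
  | Or a b => Cantor.to_nat (2, Cantor.to_nat (form_code a, form_code b))
  | Imp a b => Cantor.to_nat (3, Cantor.to_nat (form_code a, form_code b))
  | Neg a => Cantor.to_nat (4, form_code a)
  | Cond a b => Cantor.to_nat (5, Cantor.to_nat (form_code a, form_code b))
  end.

Lemma form_code_inj A B : form_code A = form_code B -> A = B.
Proof.
  revert B; induction A; destruct B; cbn [form_code]; intro E;
    apply Cantor_to_nat_inj in E as [Etag E]; try discriminate Etag;
    try apply Cantor_to_nat_inj in E as [E1 E2]; f_equal; auto.
Qed.

Definition label_code (p : bool * form) : nat :=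
  Cantor.to_nat (Nat.b2n (fst p), form_code (snd p)).

Lemma label_code_inj p q : label_code p = label_code q -> p = q.
Proof.
  destruct p as [[] A], q as [[] B]; unfold label_code; cbn [fst snd Nat.b2n]; intro E;
    apply Cantor_to_nat_inj in E as [Etag E]; try discriminate Etag;
    rewrite (form_code_inj A B E); reflexivity.
Qed.

Definition finitely {X : Type} (Phi : list X -> list X -> Prop) (G D : X -> Prop) : Prop :=
  forall lg ld, Forall G lg -> Forall D ld -> Phi lg ld.

Lemma finitely_antitone {X : Type} (Phi : list X -> list X -> Prop) (G D G' D' : X -> Prop) :
  finitely Phi G D -> (forall x, G' x -> G x) -> (forall x, D' x -> D x) -> finitely Phi G' D'.
Proof.
  intros H HG HD lg ld Hlg Hld. apply H; eapply Forall_impl; eauto.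
Qed.

Lemma not_finitely {X : Type} (Phi : list X -> list X -> Prop) (G D : X -> Prop) :
  ~ finitely Phi G D -> exists lg ld, Forall G lg /\ Forall D ld /\ ~ Phi lg ld.
Proof.
  intro H. apply NNPP; intro Hn. apply H; intros lg ld Hlg Hld.
  apply NNPP; intro N. apply Hn; eauto.
Qed.

Lemma Forall_split {X : Type} (G : X -> Prop) (x : X) (l : list X) :
  Forall (fun y => G y \/ y = x) l -> exists l', Forall G l' /\ incl l (x :: l').
Proof.
  induction 1 as [|y l [Hy| ->] _ (l' & Hl' & I)].
  - exists []. split; [constructor | intros y []].
  - exists (y :: l'). split; [constructor; assumption|].
    intros z [<-|Hz]; [right; left; reflexivity|]. destruct (I z Hz) as [<-|Hz']; simpl; auto.
  - exists l'. split; [assumption|]. intros z [<-|Hz]; [left; reflexivity | auto].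
Qed.

Lemma Forall_False_nil {X : Type} (l : list X) : Forall (fun _ => False) l -> l = [].
Proof. destruct 1; [reflexivity | contradiction]. Qed.

Lemma Forall_chain {X : Type} (F : nat -> X -> Prop) :
  (forall n m x, n <= m -> F n x -> F m x) ->
  forall l, Forall (fun x => exists n, F n x) l -> exists N, Forall (F N) l.
Proof.
  intros Fmono l. induction 1 as [|x l [n Hx] _ [N HN]].
  - exists 0. constructor.
  - exists (Nat.max n N). constructor.
    + apply (Fmono n); [apply Nat.le_max_l | exact Hx].
    + eapply Forall_impl; [|exact HN]. intro y. apply Fmono, Nat.le_max_r.
Qed.

Section Lindenbaum.

Variables (X : Type) (code : X -> nat) (Phi : list X -> list X -> Prop).
Hypothesis code_inj : forall x y, code x = code y -> x = y.
Hypothesis Phi_incl :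
  forall lg ld lg' ld', Phi lg ld -> incl lg' lg -> incl ld' ld -> Phi lg' ld'.
Hypothesis Phi_cut : forall x lg ld, Phi lg ld -> Phi (x :: lg) ld \/ Phi lg (x :: ld).

Lemma finitely_cut G D x :
  finitely Phi G D ->
  finitely Phi (fun y => G y \/ y = x) D \/ finitely Phi G (fun y => D y \/ y = x).
Proof.
  intro H. apply NNPP; intro Hn. apply not_or_and in Hn as [Hg Hd].
  apply not_finitely in Hg as (lg1 & ld1 & Hlg1 & Hld1 & N1).
  apply not_finitely in Hd as (lg2 & ld2 & Hlg2 & Hld2 & N2).
  apply Forall_split in Hlg1 as (lg1' & Hlg1' & I1).
  apply Forall_split in Hld2 as (ld2' & Hld2' & I2).
  destruct (Phi_cut x (lg1' ++ lg2) (ld1 ++ ld2')) as [C|C].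
  - apply H; apply Forall_app; auto.
  - apply N1. apply (Phi_incl _ _ _ _ C); [|apply incl_appl, incl_refl].
    intros y Hy. destruct (I1 y Hy) as [<-|Hy']; [left; reflexivity|].
    right. apply in_or_app. auto.
  - apply N2. apply (Phi_incl _ _ _ _ C); [apply incl_appr, incl_refl|].
    intros y Hy. destruct (I2 y Hy) as [<-|Hy']; [left; reflexivity|].
    right. apply in_or_app. auto.
Qed.

Lemma finitely_cut_code G D n :
  finitely Phi G D ->
  finitely Phi (fun y => G y \/ code y = n) D \/ finitely Phi G (fun y => D y \/ code y = n).
Proof.
  intro H. destruct (classic (exists x, code x = n)) as [[x <-]|Hn].
  - destruct (finitely_cut G D x H) as [C|C]; [left|right];
      apply (finitely_antitone _ _ _ _ _ C); auto;
      intros y [Hy|Hy]; auto.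
  - left. apply (finitely_antitone _ _ _ _ _ H); [|auto].
    intros y [Hy|Hy]; [exact Hy | exfalso; eauto].
Qed.

Definition decide_code (n : nat) (GD : (X -> Prop) * (X -> Prop)) : (X -> Prop) * (X -> Prop) :=
  let ok := finitely Phi (fun y => fst GD y \/ code y = n) (snd GD) in
  (fun y => fst GD y \/ (code y = n /\ ok), fun y => snd GD y \/ (code y = n /\ ~ ok)).

Lemma decide_code_finitely n GD :
  finitely Phi (fst GD) (snd GD) -> finitely Phi (fst (decide_code n GD)) (snd (decide_code n GD)).
Proof.
  destruct GD as [G D]; simpl; intro H.
  destruct (classic (finitely Phi (fun y => G y \/ code y = n) D)) as [ok|nok].
  - apply (finitely_antitone _ _ _ _ _ ok); intro y; tauto.
  - destruct (finitely_cut_code G D n H) as [C|C]; [contradiction|].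
    apply (finitely_antitone _ _ _ _ _ C); intro y; tauto.
Qed.

Fixpoint stage (G0 D0 : X -> Prop) (n : nat) : (X -> Prop) * (X -> Prop) :=
  match n with
  | 0 => (G0, D0)
  | S n => decide_code n (stage G0 D0 n)
  end.

Lemma stage_mono G0 D0 n m : n <= m ->
  (forall x, fst (stage G0 D0 n) x -> fst (stage G0 D0 m) x) /\
  (forall x, snd (stage G0 D0 n) x -> snd (stage G0 D0 m) x).
Proof. induction 1 as [|m _ [IH1 IH2]]; simpl; [tauto|]. split; intros x Hx; left; auto. Qed.

Lemma stage_finitely G0 D0 n :
  finitely Phi G0 D0 -> finitely Phi (fst (stage G0 D0 n)) (snd (stage G0 D0 n)).
Proof. intro H. induction n; [exact H | apply decide_code_finitely; assumption]. Qed.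

Theorem lindenbaum G0 D0 :
  finitely Phi G0 D0 ->
  exists G D, (forall x, G0 x -> G x) /\ (forall x, D0 x -> D x) /\
              (forall x, G x \/ D x) /\ finitely Phi G D.
Proof.
  intro H.
  exists (fun x => exists n, fst (stage G0 D0 n) x), (fun x => exists n, snd (stage G0 D0 n) x).
  split; [intros x Hx; exists 0; exact Hx|].
  split; [intros x Hx; exists 0; exact Hx|].
  split.
  - intro x.
    destruct (classic (finitely Phi (fun y => fst (stage G0 D0 (code x)) y \/ code y = code x)
                                    (snd (stage G0 D0 (code x))))) as [ok|nok];
      [left|right]; exists (S (code x)); simpl; auto.
  - intros lg ld Hlg Hld.
    apply Forall_chain in Hlg as [N1 H1]; [|intros n m x Hnm; apply (stage_mono G0 D0 n m Hnm)].
    apply Forall_chain in Hld as [N2 H2]; [|intros n m x Hnm; apply (stage_mono G0 D0 n m Hnm)].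
    apply (stage_finitely G0 D0 (Nat.max N1 N2) H).
    + eapply Forall_impl; [|exact H1]. apply stage_mono, Nat.le_max_l.
    + eapply Forall_impl; [|exact H2]. apply stage_mono, Nat.le_max_r.
Qed.

End Lindenbaum.

(** * Finitely satisfiable pairs and theories *)

Definition sat_at (M : model) (w : W M) (l d : list form) : Prop :=
  Forall (ver M w) l /\ Forall (fun f => ~ ver M w f) d.

Definition fsat (G D : form -> Prop) : Prop :=
  forall l d, Forall G l -> Forall D d -> exists M w, sat_at M w l d.

Definition theory (T : form -> Prop) : Prop := fsat T (fun f => ~ T f).

Definition fsat2 (K : forall M : model, W M -> W M -> Prop) (GT GU DT DU : form -> Prop) : Prop :=
  forall lt lu dt du, Forall GT lt -> Forall GU lu -> Forall DT dt -> Forall DU du ->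
  exists M x y, K M x y /\ sat_at M x lt dt /\ sat_at M y lu du.

Lemma fsat2_antitone K GT GU DT DU GT' GU' DT' DU' :
  fsat2 K GT GU DT DU ->
  (forall f, GT' f -> GT f) -> (forall f, GU' f -> GU f) ->
  (forall f, DT' f -> DT f) -> (forall f, DU' f -> DU f) -> fsat2 K GT' GU' DT' DU'.
Proof.
  intros H H1 H2 H3 H4 lt lu dt du Ht Hu Hdt Hdu.
  apply H; eapply Forall_impl; eauto.
Qed.

Lemma fsat2_theory_l K T U : fsat2 K T U (fun f => ~ T f) (fun f => ~ U f) -> theory T.
Proof.
  intros H l d Hl Hd.
  destruct (H l [] d [] Hl (Forall_nil _) Hd (Forall_nil _)) as (M & x & _ & _ & Hx & _).
  eauto.
Qed.

Lemma fsat2_theory_r K T U : fsat2 K T U (fun f => ~ T f) (fun f => ~ U f) -> theory U.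
Proof.
  intros H l d Hl Hd.
  destruct (H [] l [] d (Forall_nil _) Hl (Forall_nil _) Hd) as (M & _ & y & _ & _ & Hy).
  eauto.
Qed.

(* [(false, f)] speaks about the first world of a pair, [(true, f)] about the second. *)
Definition labelled (P Q : form -> Prop) (p : bool * form) : Prop :=
  if fst p then Q (snd p) else P (snd p).

Fixpoint sel (b : bool) (l : list (bool * form)) : list form :=
  match l with
  | [] => []
  | (c, f) :: l => if Bool.eqb c b then f :: sel b l else sel b l
  end.

Lemma Forall_labelled P Q l :
  Forall (labelled P Q) l <-> Forall P (sel false l) /\ Forall Q (sel true l).
Proof.
  induction l as [|[[] f] l IH]; simpl.
  - split; [split; constructor | constructor].
  - rewrite !Forall_cons_iff, IH. unfold labelled; simpl. tauto.
  - rewrite !Forall_cons_iff, IH. unfold labelled; simpl. tauto.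
Qed.

Definition sat2 (K : forall M : model, W M -> W M -> Prop) (lg ld : list (bool * form)) : Prop :=
  exists M x y, K M x y /\ Forall (labelled (ver M x) (ver M y)) lg /\
    Forall (labelled (fun f => ~ ver M x f) (fun f => ~ ver M y f)) ld.

Lemma sat2_incl K lg ld lg' ld' : sat2 K lg ld -> incl lg' lg -> incl ld' ld -> sat2 K lg' ld'.
Proof.
  intros (M & x & y & HK & Hg & Hd) Ig Id. exists M, x, y.
  split; [exact HK|]. split; eapply incl_Forall; eauto.
Qed.

Lemma sat2_cut K p lg ld : sat2 K lg ld -> sat2 K (p :: lg) ld \/ sat2 K lg (p :: ld).
Proof.
  intros (M & x & y & HK & Hg & Hd).
  destruct (classic (labelled (ver M x) (ver M y) p)) as [Hp|Hp]; [left|right];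
    exists M, x, y; repeat split; auto.
  constructor; [|exact Hd]. destruct p as [[] f]; exact Hp.
Qed.

Lemma sat2_irrefl K p : ~ sat2 K [p] [p].
Proof.
  intros (M & x & y & _ & Hg & Hd).
  apply Forall_inv in Hg, Hd. destruct p as [[] f]; exact (Hd Hg).
Qed.

Lemma fsat2_finitely K GT GU DT DU :
  fsat2 K GT GU DT DU -> finitely (sat2 K) (labelled GT GU) (labelled DT DU).
Proof.
  intros H lg ld Hlg Hld.
  apply Forall_labelled in Hlg as [Hgt Hgu], Hld as [Hdt Hdu].
  destruct (H _ _ _ _ Hgt Hgu Hdt Hdu) as (M & x & y & HK & [Hx Hx'] & [Hy Hy']).
  exists M, x, y. split; [exact HK|]. split; apply Forall_labelled; auto.
Qed.

Lemma finitely_fsat2 K GT GU DT DU :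
  finitely (sat2 K) (labelled GT GU) (labelled DT DU) -> fsat2 K GT GU DT DU.
Proof.
  intros H lt lu dt du Ht Hu Hdt Hdu.
  destruct (H (map (pair false) lt ++ map (pair true) lu)
              (map (pair false) dt ++ map (pair true) du)) as (M & x & y & HK & Hg & Hd).
  1, 2: apply Forall_app; split; apply Forall_map; assumption.
  apply Forall_app in Hg as [Hg1 Hg2], Hd as [Hd1 Hd2].
  rewrite Forall_map in Hg1, Hg2, Hd1, Hd2.
  exists M, x, y. repeat split; assumption.
Qed.

Theorem extend_fsat2 K GT GU DT DU :
  fsat2 K GT GU DT DU ->
  exists T U, fsat2 K T U (fun f => ~ T f) (fun f => ~ U f) /\
    (forall f, GT f -> T f) /\ (forall f, GU f -> U f) /\
    (forall f, DT f -> ~ T f) /\ (forall f, DU f -> ~ U f).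
Proof.
  intro H. apply fsat2_finitely in H.
  destruct (lindenbaum _ label_code (sat2 K) label_code_inj (sat2_incl K) (sat2_cut K) _ _ H)
    as (G & D & HG & HD & Htot & Hfin).
  assert (Hdisj : forall p, D p -> ~ G p).
  { intros p Hd Hg. apply (sat2_irrefl K p), Hfin; constructor; auto. }
  exists (fun f => G (false, f)), (fun f => G (true, f)). repeat split.
  - apply finitely_fsat2. apply (finitely_antitone _ _ _ _ _ Hfin).
    + intros [[] f]; auto.
    + intros [b f] Hn. destruct (Htot (b, f)); [destruct b; contradiction | assumption].
  - intros f Hf. exact (HG (false, f) Hf).
  - intros f Hf. exact (HG (true, f) Hf).
  - intros f Hf. exact (Hdisj (false, f) (HD (false, f) Hf)).
  - intros f Hf. exact (Hdisj (true, f) (HD (true, f) Hf)).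
Qed.

Corollary extend_fsat G D :
  fsat G D -> exists T, theory T /\ (forall f, G f -> T f) /\ (forall f, D f -> ~ T f).
Proof.
  intro H.
  assert (H2 : fsat2 (fun _ _ _ => True) G (fun _ => False) D (fun _ => False)).
  { intros lt lu dt du Ht Hu Hdt Hdu. apply Forall_False_nil in Hu, Hdu; subst lu du.
    destruct (H lt dt Ht Hdt) as (M & w & Hw).
    exists M, w, w. split; [exact I|]. split; [exact Hw | split; constructor]. }
  destruct (extend_fsat2 _ _ _ _ _ H2) as (T & U & HTU & HG & _ & HD & _).
  exists T. split; [exact (fsat2_theory_l _ _ _ HTU) | auto].
Qed.

Lemma persistence M A w v : le M w v -> (ver M w A -> ver M v A) /\ (fal M w A -> fal M v A).
Proof.
  revert w v.
  induction A as [p|a IHa b IHb|a IHa b IHb|a IHa b IHb|a IHa|a IHa b IHb]; intros w v Hwv; simpl.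
  - split; [apply Vp_up | apply Vm_up]; exact Hwv.
  - destruct (IHa w v Hwv), (IHb w v Hwv). tauto.
  - destruct (IHa w v Hwv), (IHb w v Hwv). tauto.
  - destruct (IHa w v Hwv), (IHb w v Hwv). split; [|tauto].
    intros Hi u Hvu. apply Hi. eapply le_trans; eauto.
  - destruct (IHa w v Hwv). tauto.
  - split.
    + intros Hi v' u Hvv'. apply Hi. eapply le_trans; eauto.
    + intros (u & Hwu & Hu). destruct (c1 M _ _ _ _ _ Hwv Hwu) as (u' & Huu' & Hvu').
      exists u'. split; [exact Hvu' | exact (proj2 (IHb u u' Huu') Hu)].
Qed.

Lemma Forall_ver_up M w v l : le M w v -> Forall (ver M w) l -> Forall (ver M v) l.
Proof. intro Hwv. apply Forall_impl. intro A. apply (persistence M A w v Hwv). Qed.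

Definition cond_rel (A : form) (M : model) : W M -> W M -> Prop :=
  R M (fun z => ver M z A) (fun z => fal M z A).

Lemma not_ver_imp M w a b :
  ~ ver M w (Imp a b) -> exists v, le M w v /\ ver M v a /\ ~ ver M v b.
Proof.
  intro H. apply NNPP; intro Hn. apply H. intros v Hwv Hva.
  apply NNPP; intro Hvb. apply Hn. eauto.
Qed.

Lemma not_ver_cond M w a b :
  ~ ver M w (Cond a b) -> exists v u, le M w v /\ cond_rel a M v u /\ ~ ver M u b.
Proof.
  intro H. apply NNPP; intro Hn. apply H. intros v u Hwv Hvu.
  apply NNPP; intro Hub. apply Hn. eauto.
Qed.

Definition top : form := Imp (Var 0) (Var 0).

Fixpoint ands (l : list form) : form :=
  match l with
  | [] => top
  | a :: l => And a (ands l)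
  end.

Fixpoint ors (d : form) (l : list form) : form :=
  match l with
  | [] => d
  | e :: l => Or d (ors e l)
  end.

Lemma ver_ands M w l : ver M w (ands l) <-> Forall (ver M w) l.
Proof.
  induction l as [|a l IH]; simpl.
  - split; [constructor | intros _ v _ h; exact h].
  - rewrite Forall_cons_iff, IH. reflexivity.
Qed.

Lemma ver_ors M w d l : ver M w (ors d l) <-> Exists (ver M w) (d :: l).
Proof.
  revert d; induction l as [|e l IH]; intro d; simpl.
  - rewrite Exists_cons, Exists_nil. tauto.
  - rewrite IH, (Exists_cons _ d). reflexivity.
Qed.

Lemma ver_cond_imp_ands M A lt lu B w :
  (forall x y, cond_rel A M x y -> Forall (ver M x) lt -> Forall (ver M y) lu -> ver M y B) ->
  Forall (ver M w) lt -> ver M w (Cond A (Imp (ands lu) B)).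
Proof.
  intros H Hw v u Hwv Hvu u' Huu' Hu'.
  destruct (c2 M _ _ _ _ _ Hvu Huu') as (v' & Hvv' & Hv'u').
  apply (H v' u' Hv'u').
  - apply (Forall_ver_up M w); [eapply le_trans; eauto | exact Hw].
  - apply ver_ands; exact Hu'.
Qed.

Definition full_model : model.
Proof.
  refine {| W := unit; W_ne := inhabits tt; le := fun _ _ => True;
            R := fun _ _ _ _ => True; Vp := fun _ _ => True; Vm := fun _ _ => True |};
    intros; try exact I; eauto.
Defined.

Lemma full_model_ver_fal A w : ver full_model w A /\ fal full_model w A.
Proof.
  revert w; induction A as [p|a IHa b IHb|a IHa b IHb|a IHa b IHb|a IHa|a IHa b IHb];
    intro w; simpl.
  - split; exact I.
  - destruct (IHa w), (IHb w). tauto.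
  - destruct (IHa w), (IHb w). tauto.
  - split; [intros; apply IHb | split; [apply IHa | apply IHb]].
  - destruct (IHa w). tauto.
  - split; [intros; apply IHb | exists tt; split; [exact I | apply IHb]].
Qed.

Lemma Forall_ver_full_model w l : Forall (ver full_model w) l.
Proof. apply Forall_forall. intros A _. apply full_model_ver_fal. Qed.

Lemma theory_full : theory (fun _ => True).
Proof.
  intros l d _ Hd. destruct Hd as [|B d HB _]; [|exfalso; exact (HB I)].
  exists full_model, tt. split; [apply Forall_ver_full_model | constructor].
Qed.

Lemma theory_closed T l d :
  theory T -> Forall T l -> (forall M w, Forall (ver M w) l -> Exists (ver M w) d) -> Exists T d.
Proof.
  intros HT Hl H. apply NNPP; intro Hd. apply Forall_Exists_neg in Hd.
  destruct (HT l d Hl Hd) as (M & w & Hw & Hnw).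
  exact (proj1 (Forall_Exists_neg _ _) Hnw (H M w Hw)).
Qed.

Lemma theory_mp T l c :
  theory T -> Forall T l -> (forall M w, Forall (ver M w) l -> ver M w c) -> T c.
Proof.
  intros HT Hl H.
  assert (E : Exists T [c]).
  { apply (theory_closed T l); [exact HT | exact Hl |]. intros M w Hw. constructor. auto. }
  apply Exists_cons in E as [Hc|Hc]; [exact Hc | inversion Hc].
Qed.

Lemma theory_mp1 T a c : theory T -> T a -> (forall M w, ver M w a -> ver M w c) -> T c.
Proof.
  intros HT Ha H. apply (theory_mp T [a]); [exact HT | auto |].
  intros M w Hw. exact (H M w (Forall_inv Hw)).
Qed.

Lemma theory_mp2 T a b c :
  theory T -> T a -> T b -> (forall M w, ver M w a -> ver M w b -> ver M w c) -> T c.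
Proof.
  intros HT Ha Hb H. apply (theory_mp T [a; b]); [exact HT | auto |].
  intros M w Hw. apply Forall_cons_iff in Hw as [Hwa Hw]. exact (H M w Hwa (Forall_inv Hw)).
Qed.

Lemma theory_prime T a b c :
  theory T -> T c -> (forall M w, ver M w c -> ver M w a \/ ver M w b) -> T a \/ T b.
Proof.
  intros HT Hc H. assert (E : Exists T [a; b]).
  { apply (theory_closed T [c]); [exact HT | auto |].
    intros M w Hw. rewrite !Exists_cons, Exists_nil. specialize (H M w (Forall_inv Hw)). tauto. }
  rewrite !Exists_cons, Exists_nil in E. tauto.
Qed.

Lemma entails_of_theories a b :
  (forall T, theory T -> T a -> T b) -> forall M w, ver M w a -> ver M w b.
Proof.
  intros H M w Ha. apply NNPP; intro Hb.
  assert (Hf : fsat (fun f => f = a) (fun f => f = b)).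
  { intros l d Hl Hd. exists M, w. split.
    - eapply Forall_impl; [|exact Hl]. intros f ->. exact Ha.
    - eapply Forall_impl; [|exact Hd]. intros f ->. exact Hb. }
  destruct (extend_fsat _ _ Hf) as (T & HT & HTa & HTb).
  exact (HTb b eq_refl (H T HT (HTa a eq_refl))).
Qed.

(** * The canonical model *)

Definition cond_sat (A : form) (T U : form -> Prop) : Prop :=
  fsat2 (cond_rel A) T U (fun f => ~ T f) (fun f => ~ U f).

Lemma cond_sat_cond A T U B : cond_sat A T U -> T (Cond A B) -> U B.
Proof.
  intros H HT. apply NNPP; intro HU.
  destruct (H [Cond A B] [] [] [B]) as (M & x & y & Hxy & [Hx _] & [_ Hy]);
    repeat constructor; try assumption.
  apply Forall_inv in Hx, Hy. exact (Hy (Hx x y (le_refl M x) Hxy)).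
Qed.

Lemma cond_sat_negcond A T U B : cond_sat A T U -> U (Neg B) -> T (Neg (Cond A B)).
Proof.
  intros H HU. apply NNPP; intro HT.
  destruct (H [] [Neg B] [Neg (Cond A B)] []) as (M & x & y & Hxy & [_ Hx] & [Hy _]);
    repeat constructor; try assumption.
  apply Forall_inv in Hx, Hy. exact (Hx (ex_intro _ y (conj Hxy Hy))).
Qed.

(* [R] takes predicates as arguments, so equivalent formulas yield the same relation only up to
   functional and propositional extensionality. *)
Lemma cond_sat_congr A a T U :
  (forall S, theory S -> (S A <-> S a)) -> (forall S, theory S -> (S (Neg A) <-> S (Neg a))) ->
  cond_sat A T U -> cond_sat a T U.
Proof.
  intros HA HNA.
  assert (E : cond_rel A = cond_rel a).
  { apply functional_extensionality_dep; intro M. unfold cond_rel.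
    f_equal; apply functional_extensionality; intro z; apply propositional_extensionality.
    - split; apply entails_of_theories; intros S HS; apply (HA S HS).
    - split; [apply (entails_of_theories (Neg A) (Neg a))
             | apply (entails_of_theories (Neg a) (Neg A))]; intros S HS; apply (HNA S HS). }
  unfold cond_sat. rewrite E. trivial.
Qed.

Lemma cond_sat_c1 A T U T' :
  cond_sat A T U -> theory T' -> (forall f, T f -> T' f) ->
  exists U', (forall f, U f -> U' f) /\ cond_sat A T' U'.
Proof.
  intros H HT' HTT'.
  assert (Hf : fsat2 (cond_rel A) T' U (fun f => ~ T' f) (fun _ => False)).
  { intros lt lu dt du Ht Hu Hdt Hdu. apply Forall_False_nil in Hdu; subst du.
    set (C := Neg (Cond A (Neg (ands lu)))).
    assert (HC : T' C).
    { apply HTT', (cond_sat_negcond A T U); [exact H|].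
      apply (theory_mp U lu); [exact (fsat2_theory_r _ _ _ H) | exact Hu |].
      intros M w Hw. apply ver_ands, Hw. }
    destruct (HT' (C :: lt) dt) as (M & w & Hw & Hdw); [constructor; assumption | exact Hdt |].
    apply Forall_cons_iff in Hw as [(u & Hwu & Hu') Hw].
    exists M, w, u. split; [exact Hwu|]. split; [split; assumption|].
    split; [apply ver_ands, Hu' | constructor]. }
  destruct (extend_fsat2 _ _ _ _ _ Hf) as (T'' & U' & HTU & HT'' & HU' & HdT & _).
  exists U'. split; [exact HU'|].
  apply (fsat2_antitone _ _ _ _ _ _ _ _ _ HTU); auto.
Qed.

Lemma cond_sat_c2 A T U U' :
  cond_sat A T U -> theory U' -> (forall f, U f -> U' f) ->
  exists T', (forall f, T f -> T' f) /\ cond_sat A T' U'.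
Proof.
  intros H HU' HUU'.
  assert (Hf : fsat2 (cond_rel A) T U' (fun _ => False) (fun f => ~ U' f)).
  { intros lt lu dt du Ht Hu Hdt Hdu. apply Forall_False_nil in Hdt; subst dt.
    destruct du as [|d ds].
    { exists full_model, tt, tt. split; [exact I|].
      split; split; try apply Forall_ver_full_model; constructor. }
    apply NNPP; intro Hn.
    set (E := Imp (ands lu) (ors d ds)).
    assert (HE : U' E).
    { apply HUU', (cond_sat_cond A T U); [exact H|].
      apply (theory_mp T lt); [exact (fsat2_theory_l _ _ _ H) | exact Ht |].
      intros M w Hw. apply (ver_cond_imp_ands M A lt); [|exact Hw].
      intros x y Hxy Hx Hy. apply ver_ors. apply NNPP; intro Hny. apply Hn.
      exists M, x, y. split; [exact Hxy|]. split; [split; [exact Hx | constructor]|].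
      split; [exact Hy | apply Forall_Exists_neg, Hny]. }
    apply (proj1 (Forall_Exists_neg _ _) Hdu).
    apply (theory_closed U' (E :: lu)); [exact HU' | constructor; assumption |].
    intros M w Hw. apply Forall_cons_iff in Hw as [HwE Hw].
    apply ver_ors, (HwE w (le_refl M w)), ver_ands, Hw. }
  destruct (extend_fsat2 _ _ _ _ _ Hf) as (T' & U'' & HTU & HT' & HU'' & _ & HdU).
  exists T'. split; [exact HT'|].
  apply (fsat2_antitone _ _ _ _ _ _ _ _ _ HTU); auto.
Qed.

Definition world : Type := {T : form -> Prop | theory T}.

Definition th (S : world) : form -> Prop := proj1_sig S.

Definition canon_le (S V : world) : Prop := forall f, th S f -> th V f.

Definition canon_R (X Y : world -> Prop) (T U : world) : Prop :=
  exists A, (forall S, X S <-> th S A) /\ (forall S, Y S <-> th S (Neg A)) /\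
            cond_sat A (th T) (th U).

Lemma canon_c1 X Y T T' U :
  canon_le T T' -> canon_R X Y T U -> exists U', canon_le U U' /\ canon_R X Y T' U'.
Proof.
  intros HTT' (A & HX & HY & H).
  destruct (cond_sat_c1 A _ _ _ H (proj2_sig T') HTT') as (U' & HUU' & H').
  exists (exist _ U' (fsat2_theory_r _ _ _ H')). split; [exact HUU'|]. exists A. auto.
Qed.

Lemma canon_c2 X Y T U U' :
  canon_R X Y T U -> canon_le U U' -> exists T', canon_le T T' /\ canon_R X Y T' U'.
Proof.
  intros (A & HX & HY & H) HUU'.
  destruct (cond_sat_c2 A _ _ _ H (proj2_sig U') HUU') as (T' & HTT' & H').
  exists (exist _ T' (fsat2_theory_l _ _ _ H')). split; [exact HTT'|]. exists A. auto.
Qed.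

Definition canonical : model := {|
  W := world;
  W_ne := inhabits (exist _ (fun _ => True) theory_full);
  le := canon_le;
  le_refl := fun S f Hf => Hf;
  le_trans := fun S V U HSV HVU f Hf => HVU f (HSV f Hf);
  R := canon_R;
  Vp := fun p S => th S (Var p);
  Vm := fun p S => th S (Neg (Var p));
  Vp_up := fun p S V HSV => HSV (Var p);
  Vm_up := fun p S V HSV => HSV (Neg (Var p));
  c1 := canon_c1;
  c2 := canon_c2
|}.

(** * Truth lemma *)

Definition truthful (A : form) : Prop :=
  forall S : world, (ver canonical S A <-> th S A) /\ (fal canonical S A <-> th S (Neg A)).

Lemma truthful_var p : truthful (Var p).
Proof. intro S. split; reflexivity. Qed.

Lemma truthful_and a b : truthful a -> truthful b -> truthful (And a b).
Proof.
  intros Ha Hb S. pose proof (proj2_sig S) as HS. simpl.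
  destruct (Ha S) as [-> ->], (Hb S) as [-> ->]. split; split.
  - intros [h1 h2]. apply (theory_mp2 _ a b); simpl; tauto.
  - intro h. split; apply (theory_mp1 _ (And a b)); simpl; tauto.
  - intros [h|h]; [apply (theory_mp1 _ (Neg a)) | apply (theory_mp1 _ (Neg b))]; simpl; tauto.
  - intro h. apply (theory_prime _ _ _ (Neg (And a b))); simpl; tauto.
Qed.

Lemma truthful_or a b : truthful a -> truthful b -> truthful (Or a b).
Proof.
  intros Ha Hb S. pose proof (proj2_sig S) as HS. simpl.
  destruct (Ha S) as [-> ->], (Hb S) as [-> ->]. split; split.
  - intros [h|h]; [apply (theory_mp1 _ a) | apply (theory_mp1 _ b)]; simpl; tauto.
  - intro h. apply (theory_prime _ _ _ (Or a b)); simpl; tauto.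
  - intros [h1 h2]. apply (theory_mp2 _ (Neg a) (Neg b)); simpl; tauto.
  - intro h. split; apply (theory_mp1 _ (Neg (Or a b))); simpl; tauto.
Qed.

Lemma truthful_neg a : truthful a -> truthful (Neg a).
Proof.
  intros Ha S. pose proof (proj2_sig S) as HS. simpl.
  destruct (Ha S) as [-> ->]. split; [reflexivity|].
  split; intro h; [apply (theory_mp1 _ a) | apply (theory_mp1 _ (Neg (Neg a)))]; simpl; tauto.
Qed.

Lemma canon_imp_complete (S : world) a b :
  (forall V, canon_le S V -> th V a -> th V b) -> th S (Imp a b).
Proof.
  intro H. apply NNPP; intro Hn.
  assert (Hf : fsat (fun f => th S f \/ f = a) (fun f => f = b)).
  { intros l d Hl Hd. apply Forall_split in Hl as (l' & Hl' & I).
    destruct (proj2_sig S l' [Imp a b]) as (M & w & Hw & Hnw); [exact Hl' | auto |].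
    apply Forall_inv, not_ver_imp in Hnw as (v & Hwv & Hva & Hvb).
    exists M, v. split.
    - apply (incl_Forall I). constructor; [exact Hva | exact (Forall_ver_up M w v l' Hwv Hw)].
    - eapply Forall_impl; [|exact Hd]. intros f ->. exact Hvb. }
  destruct (extend_fsat _ _ Hf) as (V & HV & HSV & HVb).
  apply (HVb b eq_refl), (H (exist _ V HV)); [intros f Hf'|]; apply HSV; auto.
Qed.

Lemma truthful_imp a b : truthful a -> truthful b -> truthful (Imp a b).
Proof.
  intros Ha Hb S. pose proof (proj2_sig S) as HS. split; split.
  - intro H. apply canon_imp_complete. intros V HSV HVa.
    apply (Hb V), H; [exact HSV | apply (Ha V), HVa].
  - intros H V HSV HVa. apply (Hb V). apply (Ha V) in HVa.
    apply (theory_mp2 _ (Imp a b) a); [exact (proj2_sig V) | apply HSV, H | exact HVa |].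
    intros M w Hab Hwa. exact (Hab w (le_refl M w) Hwa).
  - simpl. rewrite (proj1 (Ha S)), (proj2 (Hb S)).
    intros [h1 h2]. apply (theory_mp2 _ a (Neg b)); simpl; tauto.
  - simpl. rewrite (proj1 (Ha S)), (proj2 (Hb S)).
    intro h. split; apply (theory_mp1 _ (Neg (Imp a b))); simpl; tauto.
Qed.

Lemma canon_R_iff a : truthful a -> forall V U,
  canon_R (fun S => ver canonical S a) (fun S => fal canonical S a) V U <->
  cond_sat a (th V) (th U).
Proof.
  intros Ha V U. split.
  - intros (A & HX & HY & H). apply (cond_sat_congr A); [| |exact H]; intros T HT;
      set (S := exist _ T HT : world).
    + exact (iff_trans (iff_sym (HX S)) (proj1 (Ha S))).
    + exact (iff_trans (iff_sym (HY S)) (proj2 (Ha S))).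
  - intro H. exists a. split; [|split]; [apply Ha | apply Ha | exact H].
Qed.

Lemma canon_cond_complete (S : world) a b :
  (forall V U : world, canon_le S V -> cond_sat a (th V) (th U) -> th U b) -> th S (Cond a b).
Proof.
  intro H. apply NNPP; intro Hn.
  assert (Hf : fsat2 (cond_rel a) (th S) (fun _ => False) (fun _ => False) (fun f => f = b)).
  { intros lt lu dt du Ht Hu Hdt Hdu.
    apply Forall_False_nil in Hu, Hdt; subst lu dt.
    destruct (proj2_sig S lt [Cond a b]) as (M & w & Hw & Hnw); [exact Ht | auto |].
    apply Forall_inv, not_ver_cond in Hnw as (v & u & Hwv & Hvu & Hub).
    exists M, v, u. split; [exact Hvu|]. split; split; try constructor.
    - exact (Forall_ver_up M w v lt Hwv Hw).
    - eapply Forall_impl; [|exact Hdu]. intros f ->. exact Hub. }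
  destruct (extend_fsat2 _ _ _ _ _ Hf) as (V & U & HVU & HSV & _ & _ & HUb).
  apply (HUb b eq_refl).
  exact (H (exist _ V (fsat2_theory_l _ _ _ HVU)) (exist _ U (fsat2_theory_r _ _ _ HVU))
           HSV HVU).
Qed.

Lemma canon_negcond_witness (S : world) a b :
  th S (Neg (Cond a b)) -> exists U : world, cond_sat a (th S) (th U) /\ th U (Neg b).
Proof.
  intro H.
  assert (Hf : fsat2 (cond_rel a) (th S) (fun f => f = Neg b)
                     (fun f => ~ th S f) (fun _ => False)).
  { intros lt lu dt du Ht Hu Hdt Hdu. apply Forall_False_nil in Hdu; subst du.
    destruct (proj2_sig S (Neg (Cond a b) :: lt) dt) as (M & w & Hw & Hdw);
      [constructor; assumption | exact Hdt |].
    apply Forall_cons_iff in Hw as [(u & Hwu & Hub) Hw].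
    exists M, w, u. split; [exact Hwu|]. split; [split; assumption|]. split; [|constructor].
    eapply Forall_impl; [|exact Hu]. intros f ->. exact Hub. }
  destruct (extend_fsat2 _ _ _ _ _ Hf) as (V & U & HVU & HSV & HU & HVS & _).
  exists (exist _ U (fsat2_theory_r _ _ _ HVU)). split; [|apply HU; reflexivity].
  apply (fsat2_antitone _ _ _ _ _ _ _ _ _ HVU); auto.
Qed.

Lemma truthful_cond a b : truthful a -> truthful b -> truthful (Cond a b).
Proof.
  intros Ha Hb S. split; split.
  - intro H. apply canon_cond_complete. intros V U HSV HVU.
    apply (Hb U), (H V U HSV), canon_R_iff; assumption.
  - intros H V U HSV HVU. apply (Hb U). apply canon_R_iff in HVU; [|exact Ha].
    apply (cond_sat_cond a (th V) (th U) b HVU), HSV, H.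
  - intros (U & HSU & HUb). apply canon_R_iff in HSU; [|exact Ha].
    apply (cond_sat_negcond a _ _ b HSU), (Hb U), HUb.
  - intro H. destruct (canon_negcond_witness S a b H) as (U & HSU & HUb).
    exists U. split; [apply canon_R_iff; assumption | apply (Hb U), HUb].
Qed.

Theorem truth A : truthful A.
Proof.
  induction A; auto using truthful_var, truthful_and, truthful_or, truthful_imp, truthful_neg,
    truthful_cond.
Qed.

Lemma not_conseq_of_fsat G D : fsat G D -> ~ conseq G D.
Proof.
  intros H Hc. destruct (extend_fsat G D H) as (T & HT & HG & HD).
  apply Hc. exists canonical, (exist _ T HT). split.
  - intros A HA. apply (truth A), HG, HA.
  - intros B HB Hv. apply (truth B) in Hv. exact (HD B HB Hv).
Qed.

Theorem corollary1 (Gamma Delta : form -> Prop) :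
  ~ conseq Gamma Delta <->
  (forall Gamma' Delta' : form -> Prop,
     finite_subset Gamma' Gamma -> finite_subset Delta' Delta ->
     ~ conseq Gamma' Delta').
Proof.
  split.
  - intros H G' D' [_ HG] [_ HD] Hc. apply H. intros (M & w & H1 & H2).
    apply Hc. exists M, w. split; auto.
  - intro H. apply not_conseq_of_fsat. intros l d Hl Hd.
    rewrite Forall_forall in Hl, Hd.
    assert (Hfin : ~ conseq (fun f => In f l) (fun f => In f d)).
    { apply H; split; eauto; [exists l | exists d]; reflexivity. }
    apply NNPP in Hfin as (M & w & Hw & Hnw).
    exists M, w. split; apply Forall_forall; auto.
Qed.
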